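(* Let $X$ be a real Banach space such that $d^*(t) > 0$ for every $0<t<2$. Then for every $0<t<2$: (a) $\delta_{X^*}(t) \geq d^*(t/4)$, and (b) $d^*(t) \geq \delta_{X^*}(t/20)$.
   Context: $B(\cdot)$, $S(\cdot)$ denote closed unit ball and unit sphere. For $0<t<2$, $f \in S(X^* )$, $x \in S(X)$: $s^*(f,x,t) := \inf\{\|f+h\| - 1 : h\in X^*,\ \|h\| \geq t/4,\ h(x)=0\}$; $d^*(f,t) := \sup_{x\in S(X)} s^*(f,x,t)$; $d^*(t) := \inf_{f\in S(X^* )} d^*(f,t)$. The modulus of convexity of $X^*$ is $\delta_{X^*}(t) := \inf\{1 - \|f+g\|/2 : f,g \in S(X^* ),\ \|f-g\| \geq t\}$. *)

From HB Require Import structures.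
From mathcomp Require Import all_boot all_order all_algebra.
From mathcomp Require Import all_classical all_reals all_analysis.
Set Implicit Arguments. Unset Strict Implicit. Unset Printing Implicit Defensive.
Import Order.TTheory GRing.Theory Num.Theory.
Import numFieldNormedType.Exports.
Local Open Scope classical_set_scope.
Local Open Scope ring_scope.

Section Dual.
Context {R : realType} {X : normedModType R}.

Definition is_dual (f : X -> R) : Prop :=
  (forall (a : R) (x y : X), f (a *: x + y) = a * f x + f y) /\ continuous f.

Definition dnorm (f : X -> R) : R :=
  sup [set `|f x| | x in [set x : X | `|x| <= 1]].

Definition sstar (f : X -> R) (x : X) (t : R) : \bar R :=
  ereal_inf [set ((dnorm (f \+ h) - 1)%:E) |
     h in [set h : X -> R | [/\ is_dual h, t / 4 <= dnorm h & h x = 0]]].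

Definition dstar_f (f : X -> R) (t : R) : \bar R :=
  ereal_sup [set sstar f x t | x in [set x : X | `|x| = 1]].

Definition dstar (t : R) : \bar R :=
  ereal_inf [set dstar_f f t | f in [set f : X -> R | is_dual f /\ dnorm f = 1]].

Definition delta_dual (t : R) : \bar R :=
  ereal_inf [set ((1 - dnorm (fg.1 \+ fg.2) / 2)%:E) |
     fg in [set fg : (X -> R) * (X -> R) |
              [/\ is_dual fg.1, dnorm fg.1 = 1, is_dual fg.2, dnorm fg.2 = 1 &
                  t <= dnorm (fg.1 \- fg.2)]]].

End Dual.

(* Part (b): for f in S(X^* ), pick x in S(X) with f x close to 1.  If h x = 0 and
   |h| >= t/4, then g := (f + h) / |f + h| is a unit functional with |f - g| >= t/20 and
   1 - |f + g|/2 <= |f + h| - 1 + o(1), so delta_{X^* }(t/20) <= s^*(f, x, t).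
   Part (a): let f, g in S(X^* ) with |f - g| >= t and d := 1 - |f + g|/2.  If d >= t/16,
   adding to f a functional of norm d vanishing at x (Hahn-Banach, dim X >= 2) shows
   d^*(t/4) <= d.  Otherwise let r := |f + g|/2, m := (f + g)/2, u := (f - g)/2 and
   f0 := m/r.  Depending on how |u x| r compares with d |m x|, one of
   h := e u - c m or h := s (m + e u) - f0, with e = +-1 and c, s >= 0 chosen so that
   h x = 0, has |h| >= t/16 and |f0 + h| <= 1 + d, because m + e u is f or g. *)

From HB Require Import structures.
From mathcomp Require Import all_boot all_order all_algebra.
From mathcomp Require Import all_classical all_reals all_analysis.
From mathcomp Require Import ring lra.
Import Order.TTheory GRing.Theory Num.Theory.
Import numFieldNormedType.Exports.
Local Open Scope classical_set_scope.
Local Open Scope ring_scope.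

Section DualNorm.
Context {R : realType} {X : normedModType R}.
Implicit Types (f g h : X -> R) (x y : X).

Lemma dual0 {f} : is_dual f -> f 0 = 0.
Proof.
by move=> [lin _]; have := lin 1 0 0; rewrite scale1r addr0 mul1r; lra.
Qed.

Lemma dualD f x y : is_dual f -> f (x + y) = f x + f y.
Proof. by move=> [lin _]; have := lin 1 x y; rewrite scale1r mul1r. Qed.

Lemma dualZ f a x : is_dual f -> f (a *: x) = a * f x.
Proof.
by move=> df; have [lin _] := df; have := lin a x 0; rewrite !addr0 dual0 // addr0.
Qed.

Lemma is_dual_ext {f g} : is_dual g -> f =1 g -> is_dual f.
Proof. by move=> dg /funext ->. Qed.

Lemma is_dualD {f g} : is_dual f -> is_dual g -> is_dual (f \+ g).
Proof.
move=> [lf cf] [lg cg]; split=> [a x y|x] /=; first by rewrite lf lg; ring.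
exact: (@continuousD _ _ _ f g x (cf x) (cg x)).
Qed.

Lemma is_dualZ {f} a : is_dual f -> is_dual (fun x => a * f x).
Proof.
move=> [lf cf]; split=> [b x y|x] /=; first by rewrite lf; ring.
exact: (@continuousM _ _ (fun=> a) f x (@cst_continuous _ _ a x) (cf x)).
Qed.

Lemma is_dual_comb {f g} a b : is_dual f -> is_dual g -> is_dual (fun x => a * f x + b * g x).
Proof. by move=> df dg; apply: is_dualD; exact: is_dualZ. Qed.

Lemma is_dualB {f g} : is_dual f -> is_dual g -> is_dual (f \- g).
Proof.
move=> df dg; apply: (is_dual_ext (is_dual_comb 1 (-1) df dg)) => x /=; ring.
Qed.

Lemma dual_bounded {f} : is_dual f -> exists2 C, 0 < C & forall x, `|f x| <= C * `|x|.
Proof.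
move=> df; have [_ cf] := df.
have := cf 0; rewrite /continuous_at dual0 // => /cvgrPdist_lt /(_ 1 ltr01).
move=> /nbhs_ballP [e /= e0 He]; exists (2 / e) => [|x]; first by rewrite divr_gt0.
have [->|x0] := eqVneq x 0; first by rewrite dual0 // !normr0 mulr0.
have nx0 : 0 < `|x| by rewrite normr_gt0.
have a0 : 0 < e / (2 * `|x|) by rewrite divr_gt0 // mulr_gt0.
have : ball (0 : X) e ((e / (2 * `|x|)) *: x).
  rewrite -ball_normE /ball_ /= sub0r normrN normrZ gtr0_norm //.
  have -> : e / (2 * `|x|) * `|x| = e / 2 by field; rewrite gt_eqF.
  lra.
move=> /He; rewrite sub0r normrN dualZ // normrM gtr0_norm // => H.
have -> : 2 / e * `|x| = (e / (2 * `|x|))^-1 by field; rewrite !gt_eqF.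
by rewrite -(ler_pM2l a0) mulfV ?gt_eqF //; exact: ltW.
Qed.

Let ball_image f := [set `|f x| | x in [set x : X | `|x| <= 1]].

Let has_sup_ball_image {f} : is_dual f -> has_sup (ball_image f).
Proof.
move=> df; have [C C0 HC] := dual_bounded df.
split; first by exists `|f 0|, 0 => //=; rewrite normr0.
exists C => _ [x /= x1 <-]; apply: (le_trans (HC x)).
by rewrite ler_piMr // ltW.
Qed.

Lemma ler_dnorm_ball {f} x : is_dual f -> `|x| <= 1 -> `|f x| <= dnorm f.
Proof.
by move=> df x1; apply: sup_upper_bound; [exact: has_sup_ball_image | exists x].
Qed.

Lemma dnorm_le f c : (forall x, `|x| <= 1 -> `|f x| <= c) -> dnorm f <= c.
Proof.
move=> H; apply: ge_sup; first by exists `|f 0|, 0 => //=; rewrite normr0.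
by move=> _ [x /= x1 <-]; exact: H.
Qed.

Lemma dnorm_ge0 {f} : is_dual f -> 0 <= dnorm f.
Proof.
move=> df; apply: le_trans (ler_dnorm_ball 0 df _); last by rewrite normr0.
exact: normr_ge0.
Qed.

Lemma ler_dnorm {f} x : is_dual f -> `|f x| <= dnorm f * `|x|.
Proof.
move=> df; have [->|x0] := eqVneq x 0; first by rewrite dual0 // !normr0 mulr0.
have nx0 : 0 < `|x| by rewrite normr_gt0.
have := @ler_dnorm_ball f (`|x|^-1 *: x) df.
rewrite normrZ normfV normr_id mulVf ?gt_eqF // lexx dualZ //.
rewrite normrM ger0_norm ?invr_ge0 ?normr_ge0 // => /(_ isT).
by rewrite ler_pdivrMl // mulrC.
Qed.

Lemma dnorm_approx {f} e : is_dual f -> 0 < e ->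
  exists2 x, `|x| <= 1 & dnorm f - e < `|f x|.
Proof.
move=> df e0; have [_ [x /= x1 <-] H] := sup_adherent e0 (has_sup_ball_image df).
by exists x.
Qed.

Lemma dnorm_le_sum {f f1 f2} : is_dual f1 -> is_dual f2 -> f =1 f1 \+ f2 ->
  dnorm f <= dnorm f1 + dnorm f2.
Proof.
move=> d1 d2 E; apply: dnorm_le => z z1; rewrite E.
by apply: (le_trans (ler_normD _ _)); apply: lerD; exact: ler_dnorm_ball.
Qed.

Lemma dnormD {f g} : is_dual f -> is_dual g -> dnorm (f \+ g) <= dnorm f + dnorm g.
Proof. by move=> df dg; exact: dnorm_le_sum. Qed.

Lemma dnormZ {f} a : is_dual f -> dnorm (fun x => a * f x) = `|a| * dnorm f.
Proof.
move=> df; apply/eqP; rewrite eq_le; apply/andP; split.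
  apply: dnorm_le => x x1; rewrite normrM.
  by apply: ler_wpM2l => //; exact: ler_dnorm_ball.
have [->|a0] := eqVneq a 0.
  by rewrite normr0 mul0r; apply: dnorm_ge0; exact: is_dualZ.
rewrite -ler_pdivlMl ?normr_gt0 //; apply: dnorm_le => x x1.
rewrite ler_pdivlMl ?normr_gt0 // -normrM.
by apply: ler_dnorm_ball => //; exact: is_dualZ.
Qed.

Lemma dnorm_gt0 {f} x : is_dual f -> f x != 0 -> 0 < dnorm f.
Proof.
move=> df fx; have x0 : x != 0 by apply: contraNneq fx => ->; rewrite dual0.
rewrite -normr_gt0 in fx; have := lt_le_trans fx (ler_dnorm x df).
by rewrite pmulr_lgt0 // normr_gt0.
Qed.

Lemma dual_norming_point {f} e : is_dual f -> dnorm f = 1 -> 0 < e -> e < 1 ->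
  exists x, `|x| = 1 /\ 1 - e < f x.
Proof.
move=> df nf e0 e1; have [x0 x01] := dnorm_approx e df e0; rewrite nf => Hx0.
have x0n : x0 != 0.
  by apply: contraTneq Hx0 => ->; rewrite dual0 // normr0 -leNgt; lra.
have nx0 : 0 < `|x0| by rewrite normr_gt0.
pose s : R := if 0 <= f x0 then 1 else -1.
have sf : s * f x0 = `|f x0|.
  rewrite /s; case: ifPn => H; first by rewrite mul1r ger0_norm.
  by rewrite mulN1r ltr0_norm // ltNge.
exists ((s / `|x0|) *: x0); split.
  rewrite normrZ normrM normfV normr_id mulfVK ?gt_eqF // /s.
  by case: ifP => _; rewrite ?normrN normr1.
rewrite dualZ // mulrAC sf; apply: lt_le_trans Hx0 _.
by rewrite ler_pdivlMr // ler_piMr.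
Qed.

End DualNorm.

Section HahnBanach.
Context {R : realType} {V : lmodType R}.
Variables (p : V -> R) (y : V).
Hypothesis pD : forall z w, p (z + w) <= p z + p w.
Hypothesis pZ : forall (c : R) z, p (c *: z) = `|c| * p z.

Let p0 : p 0 = 0.
Proof. by have := pZ 0 0; rewrite scale0r normr0 mul0r. Qed.

Let p_ge0 z : 0 <= p z.
Proof.
have := pD z (- z); rewrite subrr p0 -scaleN1r pZ normrN normr1 mul1r => H.
lra.
Qed.

(* Graphs of p-dominated linear functionals on subspaces containing y, with value p y at y;
   Zorn's lemma is applied to these graphs. *)
Definition hb_graph (G : set (V * R)) : Prop :=
  [/\ forall z a b, G (z, a) -> G (z, b) -> a = b,
      forall (c : R) z w a b, G (z, a) -> G (w, b) -> G (c *: z + w, c * a + b),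
      forall z a, G (z, a) -> a <= p z & G (y, p y)].

Lemma hb_graphZ {G} (c : R) {z a} : hb_graph G -> G (z, a) -> G (c *: z, c * a).
Proof.
move=> [_ lin _ Gy] Gz; have := lin (-1) y y _ _ Gy Gy.
rewrite scaleN1r mulN1r !addNr => G0.
by have := lin c z 0 a 0 Gz G0; rewrite !addr0.
Qed.

Lemma hb_graph_chain (F : set (set (V * R))) :
  F `<=` [set G | G = set0 \/ hb_graph G] -> total_on F subset ->
  let U := \bigcup_(G in F) G in U = set0 \/ hb_graph U.
Proof.
move=> FP Ftot U.
have common q1 q2 : U q1 -> U q2 -> exists2 G, hb_graph G & G q1 /\ G q2 /\ G `<=` U.
  move=> [G1 FG1 G1q] [G2 FG2 G2q].
  have graph G q : F G -> G q -> hb_graph G.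
    by move=> FG Gq; case: (FP G FG) => // G0; move: Gq; rewrite G0.
  have [S12|S21] := Ftot _ _ FG1 FG2.
  - by exists G2; [exact: graph G2q | split; [exact: S12 | split=> // q Gq; exists G2]].
  - by exists G1; [exact: graph G1q | split=> //; split; [exact: S21 | move=> q Gq; exists G1]].
have [U0|/set0P [q0 Uq0]] := eqVneq U set0; first by left.
right; split.
- move=> z a b Ua Ub; have [G [fun_G _ _ _] [Ga [Gb _]]] := common _ _ Ua Ub.
  exact: fun_G Ga Gb.
- move=> c z w a b Ua Ub; have [G [_ lin _ _] [Ga [Gb GU]]] := common _ _ Ua Ub.
  exact/GU/lin.
- by move=> z a Ua; have [G [_ _ dom _] [Ga _]] := common _ _ Ua Ua; exact: dom.
- by have [G [_ _ _ Gy] [_ [_ GU]]] := common _ _ Uq0 Uq0; exact: GU.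
Qed.

Section OneStepExtension.
Variables (G : set (V * R)) (z : V).
Hypothesis hG : hb_graph G.
Hypothesis zG : forall a, ~ G (z, a).

Let gap w a w' a' : G (w, a) -> G (w', a') -> a - p (w - z) <= p (w' + z) - a'.
Proof.
move=> Ga Ga'; have [_ lin dom _] := hG.
have := dom _ _ (lin 1 w w' a a' Ga Ga'); rewrite scale1r mul1r.
have := pD (w - z) (w' + z); rewrite [w' + z]addrC addrA subrK => H1 H2; lra.
Qed.

Let c := sup [set q.2 - p (q.1 - z) | q in G].

Let c_bounds {w a} : G (w, a) -> a - p (w - z) <= c /\ c <= p (w + z) - a.
Proof.
move=> Ga; have hs : has_sup [set q.2 - p (q.1 - z) | q in G].
  split; first by exists (a - p (w - z)), (w, a).
  by exists (p (w + z) - a) => _ [[w' a'] Ga' <-]; exact: gap.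
split; first by apply: sup_upper_bound => //; exists (w, a).
by apply: ge_sup => [|_ [[w' a'] Ga' <-]]; [case: hs | exact: gap].
Qed.

Let B := [set q | exists w a s, G (w, a) /\ q = (w + s *: z, a + s * c)].

Let B_functional z1 a1 b1 : B (z1, a1) -> B (z1, b1) -> a1 = b1.
Proof.
have [fun_G lin _ _] := hG.
move=> [w [a [s [Ga [-> ->]]]]] [w' [a' [s' [Ga' [Ez ->]]]]].
move: Ez; have [<-|ss] := eqVneq s s' => Ez.
  have Ew : w = w' by apply: (addIr (s *: z)).
  by rewrite (fun_G w a a') // Ew.
exfalso; apply: (zG ((s - s')^-1 * (a' - a))).
have -> : z = (s - s')^-1 *: (w' - w).
  have Esz : s *: z = w' + s' *: z - w by rewrite -Ez [w + _]addrC addrK.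
  have -> : w' - w = (s - s') *: z by rewrite scalerBl Esz addrAC addrK.
  by rewrite scalerA mulVf ?scale1r // subr_eq0.
apply: hb_graphZ => //; have := lin (-1) w w' a a' Ga Ga'.
by rewrite scaleN1r mulN1r addrC [a' + _]addrC.
Qed.

Let B_linear (k : R) z1 z2 a1 a2 : B (z1, a1) -> B (z2, a2) -> B (k *: z1 + z2, k * a1 + a2).
Proof.
have [_ lin _ _] := hG.
move=> [w1 [b1 [s1 [Gw1 [-> ->]]]]] [w2 [b2 [s2 [Gw2 [-> ->]]]]].
exists (k *: w1 + w2), (k * b1 + b2), (k * s1 + s2); split; first exact: lin.
congr (_, _); last by ring.
by rewrite scalerDr scalerA addrACA -scalerDl.
Qed.

(* For s < 0 apply a - p (w - z) <= c to (w, a) / |s|;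
   for s > 0 apply c <= p (w + z) - a to (w, a) / s. *)
Let B_dominated z1 a1 : B (z1, a1) -> a1 <= p z1.
Proof.
have [_ _ dom _] := hG.
move=> [w [a [s [Ga [-> ->]]]]].
have [s0|s0|->] := ltgtP s 0; last by rewrite scale0r mul0r !addr0; exact: dom.
- have [cub _] := c_bounds (hb_graphZ (- s)^-1 hG Ga).
  have -> : w + s *: z = (- s) *: ((- s)^-1 *: w - z).
    by rewrite scalerBr scalerA mulfV ?oppr_eq0 ?lt_eqF // scale1r scaleNr opprK.
  rewrite pZ gtr0_norm ?oppr_gt0 //.
  have : - s * ((- s)^-1 * a - p ((- s)^-1 *: w - z)) <= - s * c by rewrite ler_pM2l ?oppr_gt0.
  by rewrite mulrBr mulrA mulfV ?oppr_eq0 ?lt_eqF // mul1r => H; lra.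
- have [_ clb] := c_bounds (hb_graphZ s^-1 hG Ga).
  have -> : w + s *: z = s *: (s^-1 *: w + z).
    by rewrite scalerDr scalerA mulfV ?gt_eqF // scale1r.
  rewrite pZ gtr0_norm //.
  have : s * c <= s * (p (s^-1 *: w + z) - s^-1 * a) by rewrite ler_pM2l.
  by rewrite mulrBr mulrA mulfV ?gt_eqF // mul1r => H; lra.
Qed.

Lemma hb_graph_extension : exists2 B, hb_graph B & G `<` B.
Proof.
have [_ _ _ Gy] := hG.
have GB : G `<=` B by move=> [w a] Ga; exists w, a, 0; rewrite scale0r mul0r !addr0.
exists B; first by split; [exact: B_functional | exact: B_linear | exact: B_dominated | exact: GB].
split=> // /(_ (z, c)) zcG; apply: (zG c); apply: zcG.
have G0 : G (0, 0) by have := hb_graphZ 0 hG Gy; rewrite scale0r mul0r.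
by exists 0, 0, 1; rewrite scale1r mul1r !add0r.
Qed.

End OneStepExtension.

Theorem hahn_banach : exists l : V -> R,
  [/\ forall (c : R) z w, l (c *: z + w) = c * l z + l w,
      forall z, l z <= p z & l y = p y].
Proof.
have [A [PA Amax]] := Zorn_bigcup hb_graph_chain.
have hA : hb_graph A.
  case: PA => // A0; exfalso.
  pose L := [set q | exists b : R, q = (b *: y, b * p y)].
  apply: (Amax L); last first.
    right; split.
    - move=> z a b [b1 [E1 ->]] [b2 [E2 ->]].
      have [->|y0] := eqVneq y 0; first by rewrite p0 !mulr0.
      have : (b1 - b2) *: y = 0 by rewrite scalerBl -E1 -E2 subrr.
      by move/eqP; rewrite scaler_eq0 (negbTE y0) orbF subr_eq0 => /eqP ->.
    - move=> c z w a b [b1 [-> ->]] [b2 [-> ->]].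
      by exists (c * b1 + b2); rewrite scalerDl scalerA; congr (_, _); ring.
    - move=> z a [b [-> ->]]; rewrite pZ.
      by apply: ler_wpM2r; [exact: p_ge0 | exact: ler_norm].
    - by exists 1; rewrite scale1r mul1r.
  rewrite A0; split=> // /(_ (y, p y)); apply.
  by exists 1; rewrite scale1r mul1r.
have [fun_A lin dom Ay] := hA.
have total z : exists a, A (z, a).
  apply: contrapT => nz; have zA a : ~ A (z, a) by move=> Aa; apply: nz; exists a.
  by have [B hB AB] := hb_graph_extension A z hA zA; apply: (Amax B AB); right.
pose l z := xget 0 [set a | A (z, a)].
have Al z : A (z, l z) by exact: (xgetPex 0 (total z)).
exists l; split.
- by move=> c z w; apply: fun_A (Al _) _; exact: lin.
- by move=> z; exact: dom.
- exact: fun_A (Al y) Ay.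
Qed.

End HahnBanach.

Section Annihilator.
Context {R : realType} {X : normedModType R}.

Lemma is_dual_dominated (l : X -> R) (K : R) :
  (forall (c : R) z w, l (c *: z + w) = c * l z + l w) ->
  (forall z, l z <= K * `|z|) -> is_dual l.
Proof.
move=> lin bnd; split=> // z0; apply/cvgrPdist_lt => e e0.
have lB z w : l z - l w = l (z - w).
  by have := lin (-1) w z; rewrite scaleN1r mulN1r addrC [- _ + _]addrC.
have K1 : 0 < `|K| + 1 by rewrite ltr_wpDl.
apply/nbhs_ballP; exists (e / (`|K| + 1)) => /=; first by rewrite divr_gt0.
move=> z; rewrite -ball_normE /ball_ /= ltr_pdivlMr // => Hz.
have Kd : `|K| * `|z0 - z| < e.
  by apply: le_lt_trans Hz; rewrite mulrDr mulr1 mulrC lerDl.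
have := bnd (z0 - z); have := bnd (z - z0); rewrite -!lB distrC.
have := normr_ge0 (z0 - z); have := ler_norm K; have := ler_norm (- K).
rewrite normrN ltr_norml => *; apply/andP; split; nra.
Qed.

Lemma exists_norming_dual (x : X) : exists f, [/\ is_dual f, f x = `|x| & dnorm f <= 1].
Proof.
have [l [lin lp lx]] := @hahn_banach _ _ (fun z : X => `|z|) x (@ler_normD _ X) (@normrZ _ X).
have dl : is_dual l by apply: (@is_dual_dominated l 1 lin) => z; rewrite mul1r.
exists l; split=> //; apply: dnorm_le => z z1.
rewrite ler_norml lerNl -mulN1r -dualZ // scaleN1r.
by apply/andP; split; apply: le_trans (lp _) _; rewrite ?normrN.
Qed.

(* Hahn-Banach at y for the seminorm z |-> |z - (f z / f x) x|, f a norming functional at x;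
   this seminorm vanishes at x but not at y. *)
Lemma exists_annihilator {x y : X} : x != 0 -> (forall a : R, y != a *: x) ->
  exists h, [/\ is_dual h, h x = 0 & h y != 0].
Proof.
move=> x0 yx; have [f [df fx nf]] := exists_norming_dual x.
have fx0 : f x != 0 by rewrite fx normr_eq0.
pose P z := z - (f z / f x) *: x.
have PD z w : P (z + w) = P z + P w.
  by rewrite /P dualD // mulrDl scalerDl opprD addrACA.
have PZ (c : R) z : P (c *: z) = c *: P z.
  by rewrite /P dualZ // scalerBr scalerA mulrA.
have pD z w : `|P (z + w)| <= `|P z| + `|P w| by rewrite PD ler_normD.
have pZ (c : R) z : `|P (c *: z)| = `|c| * `|P z| by rewrite PZ normrZ.
have [l [lin lp ly]] := @hahn_banach _ _ (fun z => `|P z|) y pD pZ.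
have Px : P x = 0 by rewrite /P mulfV // scale1r subrr.
have dl : is_dual l.
  apply: (@is_dual_dominated l 2 lin) => z; apply: le_trans (lp z) _.
  apply: le_trans (ler_normB _ _) _; rewrite normrZ normrM normfV fx normr_id.
  rewrite mulfVK ?normr_eq0 // mulr2n mulrDl mul1r lerD2l.
  by apply: le_trans (ler_dnorm z df) _; rewrite ler_piMl.
exists l; split=> //.
  have lx0 : l x <= 0 by have := lp x; rewrite Px normr0.
  have lNx0 : - l x <= 0.
    by have := lp (-1 *: x); rewrite PZ Px scaler0 normr0 dualZ // mulN1r.
  by apply/eqP; rewrite eq_le lx0 -oppr_le0 lNx0.
by rewrite ly normr_eq0 subr_eq0.
Qed.

Lemma exists_nonproportional (x : X) :
  (exists x1 x2 : X, forall a b : R, a *: x1 + b *: x2 = 0 -> a = 0 /\ b = 0) ->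
  exists y : X, forall a : R, y != a *: x.
Proof.
move=> [x1 [x2 indep]]; apply: contrapT => /forallNP allx.
have prop z : exists a : R, z = a *: x.
  by have /existsNP [a /negP/negPn/eqP] := allx z; exists a.
have [a E1] := prop x1; have [b E2] := prop x2.
have [b0 _] : b = 0 /\ - a = 0.
  by apply: indep; rewrite E1 E2 !scalerA -scalerDl mulNr mulrC subrr scale0r.
suff /indep [_ /eqP] : 0 *: x1 + 1 *: x2 = 0 by rewrite oner_eq0.
by rewrite E2 b0 !scale0r scaler0 addr0.
Qed.

End Annihilator.

Section DualModuli.
Context {R : realType} {X : normedModType R}.
Implicit Types (f g h : X -> R) (x : X).

Lemma sstar_le f x t {h} : is_dual h -> t / 4 <= dnorm h -> h x = 0 ->
  (sstar f x t <= (dnorm (f \+ h) - 1)%:E)%E.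
Proof. by move=> dh th hx; apply: ereal_inf_lbound; exists h. Qed.

Lemma sstar_le_dstar_f f x t : `|x| = 1 -> (sstar f x t <= dstar_f f t)%E.
Proof. by move=> x1; apply: ereal_sup_ubound; exists x. Qed.

Lemma dstar_f_le f t (v : \bar R) :
  (forall x, `|x| = 1 -> (sstar f x t <= v)%E) -> (dstar_f f t <= v)%E.
Proof. by move=> H; apply: ge_ereal_sup => _ [x x1 <-]; exact: H. Qed.

Lemma dstar_le_dstar_f {f} t : is_dual f -> dnorm f = 1 ->
  (@dstar R X t <= dstar_f f t)%E.
Proof. by move=> df nf; apply: ereal_inf_lbound; exists f. Qed.

Lemma delta_dual_le {f g} t : is_dual f -> dnorm f = 1 -> is_dual g -> dnorm g = 1 ->
  t <= dnorm (f \- g) -> (@delta_dual R X t <= (1 - dnorm (f \+ g) / 2)%:E)%E.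
Proof. by move=> df nf dg ng fg; apply: ereal_inf_lbound; exists (f, g). Qed.

End DualModuli.

Section NormalizedSum.
Context {R : realType} {X : normedModType R}.
Context {f h : X -> R} {x : X} {t e : R}.
Hypotheses (df : is_dual f) (nf : dnorm f = 1) (dh : is_dual h).
Hypotheses (t_lt2 : t < 2) (ht : t / 4 <= dnorm h).
Hypotheses (hx : h x = 0) (x1 : `|x| = 1) (fx : 1 - e < f x) (e_small : e <= 1 / 10).

Let N := dnorm (f \+ h).
Let g z := N^-1 * (f \+ h) z.

Let fx_le1 : f x <= 1.
Proof. by have := ler_dnorm x df; rewrite nf x1 mul1r; apply: le_trans; exact: ler_norm. Qed.

Let fx_leN : f x <= N.
Proof.
have := ler_dnorm x (is_dualD df dh); rewrite -/N x1 mulr1 /= hx addr0.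
by apply: le_trans; exact: ler_norm.
Qed.

Let N_gt0 : 0 < N.
Proof. by have := fx_leN; have := fx; have := e_small; lra. Qed.

Let gx : g x = N^-1 * f x.
Proof. by rewrite /g /= hx addr0. Qed.

Let dg : is_dual g.
Proof. exact/is_dualZ/is_dualD. Qed.

Lemma dnorm_normalized_sum : dnorm g = 1.
Proof. by rewrite dnormZ ?normfV ?gtr0_norm ?mulVf ?gt_eqF //; exact: is_dualD. Qed.

(* h = N (g - f) + (N - 1) f and (N - 1) f x = N (f x - g x), with f x close to 1:
   if |f - g| were below t/20, both would force |h| < t/4. *)
Lemma normalized_sum_far : t / 20 <= dnorm (f \- g).
Proof.
set D := dnorm (f \- g); have dfg := is_dualB df dg.
have D0 : 0 <= D by exact: dnorm_ge0.
rewrite leNgt; apply/negP => Dlt.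
have hD : dnorm h <= N * D + `|N - 1|.
  apply: dnorm_le => z z1.
  have -> : h z = N * (g z - f z) + (N - 1) * f z by rewrite /g /=; field; rewrite gt_eqF.
  apply: (le_trans (ler_normD _ _)); rewrite !normrM gtr0_norm //.
  apply: lerD; first by rewrite ler_pM2l // distrC; exact: (ler_dnorm_ball z dfg z1).
  by rewrite -[leRHS]mulr1 -nf; apply: ler_wpM2l => //; exact: ler_dnorm_ball.
have fxD : `|N - 1| * f x <= N * D.
  have := ler_dnorm x dfg; rewrite x1 mulr1 /= gx.
  have -> : f x - N^-1 * f x = N^-1 * ((N - 1) * f x) by field; rewrite gt_eqF.
  rewrite normrM normfV (gtr0_norm N_gt0) (ler_pdivrMl _ _ N_gt0) normrM.
  by rewrite [`|f x|]ger0_norm //; have := fx; have := e_small; lra.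
set A := `|N - 1| in hD fxD.
have A0 : 0 <= A by exact: normr_ge0.
have NA : N <= 1 + A by rewrite /A; have := ler_norm (N - 1); lra.
have := N_gt0; have := fx; have := e_small; have := ht; have := t_lt2 => *.
have hA1 : A * (9 / 10) <= D * (1 + A).
  have : A * (9 / 10) <= A * f x by apply: ler_wpM2l => //; lra.
  have : N * D <= (1 + A) * D by exact: ler_wpM2r.
  lra.
have hA2 : A * (8 / 10) <= D by nra.
nra.
Qed.

Lemma normalized_sum_gap : 1 - dnorm (f \+ g) / 2 <= N - 1 + 2 * e.
Proof.
have Hfg : f x + N^-1 * f x <= dnorm (f \+ g).
  have := ler_dnorm x (is_dualD df dg); rewrite x1 mulr1 /= gx.
  by apply: le_trans; exact: ler_norm.
set v := N^-1 * f x in Hfg.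
have vN : v * N = f x by rewrite /v mulrAC mulVf ?gt_eqF // mul1r.
have := fx_leN; have := fx_le1; have := fx; have := e_small; have := N_gt0 => *.
have e0 : 0 < e by lra.
have hq : 0 <= (N - (1 - e)) * (2 * N - 1 + e) by apply: mulr_ge0; lra.
have : (3 - 2 * N - 3 * e) * N <= v * N by rewrite vN; nra.
rewrite ler_pM2r // => hv.
lra.
Qed.

End NormalizedSum.

Lemma delta_dual_le_dstar {R : realType} {X : normedModType R} (t : R) :
  t < 2 -> (@delta_dual R X (t / 20) <= @dstar R X t)%E.
Proof.
move=> t2; apply: le_ereal_inf_tmp => _ [f [df nf] <-] /=.
apply/lee_addgt0Pr => e e0.
pose e' := Num.min (e / 2) (1 / 10).
have e'0 : 0 < e' by rewrite lt_min; apply/andP; split; lra.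
have e'e : 2 * e' <= e.
  have : e' <= e / 2 by rewrite ge_min lexx.
  lra.
have e'1 : e' <= 1 / 10 by rewrite ge_min lexx orbT.
have [x [x1 fx]] := dual_norming_point e' df nf e'0 ltac:(lra).
have key : (@delta_dual R X (t / 20) - (2 * e')%:E <= sstar f x t)%E.
  apply: le_ereal_inf_tmp => _ [h [dh ht hx] <-]; rewrite leeBlDr // -EFinD.
  apply: le_trans (delta_dual_le _ df nf _ (dnorm_normalized_sum df dh hx x1 fx e'1)
    (normalized_sum_far df nf dh t2 ht hx x1 fx e'1)) _.
    exact/is_dualZ/is_dualD.
  by rewrite lee_fin; exact: (normalized_sum_gap df nf dh hx x1 fx e'1).
rewrite leeBlDr // in key; apply: le_trans key _.
by apply: leeD; [exact: sstar_le_dstar_f | rewrite lee_fin].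
Qed.

Lemma dstar_le_bound {R : realType} {X : normedModType R} (s d : R) :
  (forall x : X, exists y, forall a : R, y != a *: x) ->
  (exists f : X -> R, is_dual f /\ dnorm f = 1) -> 0 <= d -> s / 4 <= d ->
  (@dstar R X s <= d%:E)%E.
Proof.
move=> nonprop [f [df nf]] d0 sd; apply: le_trans (dstar_le_dstar_f s df nf) _.
apply: dstar_f_le => x x1; have x0 : x != 0 by rewrite -normr_eq0 x1 oner_neq0.
have [y xy] := nonprop x; have [h0 [dh0 h0x h0y]] := exists_annihilator x0 xy.
have h0_gt0 := dnorm_gt0 y dh0 h0y.
have dh := is_dualZ (d / dnorm h0) dh0.
have nh : dnorm (fun z => d / dnorm h0 * h0 z) = d.
  by rewrite dnormZ // ger0_norm ?divfK ?gt_eqF // divr_ge0 // ltW.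
apply: le_trans (sstar_le f x s dh _ _) _; first by rewrite nh.
  by rewrite h0x mulr0.
by rewrite lee_fin; have := dnormD df dh; rewrite nf nh; lra.
Qed.

Lemma sign_align {R : realType} (p q : R) :
  exists2 e : R, e = 1 \/ e = -1 & e * p * `|q| = `|p| * q.
Proof.
have [p0|p0] := lerP 0 p; have [q0|q0] := lerP 0 q.
- by exists 1; [left | rewrite (ger0_norm p0) (ger0_norm q0); ring].
- by exists (-1); [right | rewrite (ger0_norm p0) (ltr0_norm q0); ring].
- by exists (-1); [right | rewrite (ltr0_norm p0) (ger0_norm q0); ring].
- by exists 1; [left | rewrite (ltr0_norm p0) (ltr0_norm q0); ring].
Qed.

Section SmallGap.
Context {R : realType} {X : normedModType R} {f g : X -> R} {t : R}.
Hypotheses (df : is_dual f) (nf : dnorm f = 1) (dg : is_dual g) (ng : dnorm g = 1).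
Hypotheses (t_lt2 : t < 2) (tfg : t <= dnorm (f \- g)).
Let r := dnorm (f \+ g) / 2.
Hypothesis small_gap : 1 - r < t / 16.

Let m z := 2^-1 * (f \+ g) z.
Let u z := 2^-1 * (f \- g) z.
Let f0 z := r^-1 * m z.

Let dm : is_dual m. Proof. exact/is_dualZ/is_dualD. Qed.
Let du : is_dual u. Proof. exact/is_dualZ/is_dualB. Qed.

Let nm : dnorm m = r.
Proof. by rewrite dnormZ ?ger0_norm ?invr_ge0 // 1?mulrC //; exact: is_dualD. Qed.

Let nu : t / 2 <= dnorm u.
Proof.
rewrite dnormZ ?ger0_norm ?invr_ge0 //; last exact: is_dualB.
by have := tfg; lra.
Qed.

Let r_bounds : 7 / 8 < r <= 1.
Proof.
have := dnormD df dg; rewrite nf ng -/r => H.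
by apply/andP; split; have := small_gap; have := t_lt2; rewrite /r; lra.
Qed.

Let r_gt0 : 0 < r.
Proof. by case/andP: r_bounds; lra. Qed.

Let df0 : is_dual f0. Proof. exact: is_dualZ. Qed.

Let nf0 : dnorm f0 = 1.
Proof. by rewrite dnormZ // nm gtr0_norm ?invr_gt0 // mulVf ?gt_eqF. Qed.

Let dnorm_mu (e : R) : e = 1 \/ e = -1 -> dnorm (fun z => m z + e * u z) <= 1.
Proof.
case=> ->; apply: dnorm_le => z z1.
- have -> : m z + 1 * u z = f z by rewrite /m /u /=; field.
  by rewrite -nf; exact: ler_dnorm_ball.
- have -> : m z + -1 * u z = g z by rewrite /m /u /=; field.
  by rewrite -ng; exact: ler_dnorm_ball.
Qed.

Let sstar_zero x : m x = 0 -> (sstar f0 x (t / 4) <= (1 - r)%:E)%E.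
Proof.
move=> mx0; have dh := is_dualZ (-1) df0.
apply: le_trans (sstar_le f0 x (t / 4) dh _ _) _.
- by rewrite dnormZ // nf0 normrN normr1 mulr1; have := t_lt2; lra.
- by rewrite /f0 mx0 !mulr0.
have : dnorm (f0 \+ (fun z => -1 * f0 z)) <= 0.
  by apply: dnorm_le => z _ /=; rewrite mulN1r subrr normr0.
by rewrite lee_fin; have := r_bounds; case/andP; lra.
Qed.

Let sign_facts {e : R} : e = 1 \/ e = -1 -> `|e| = 1 /\ e * e = 1.
Proof. by case=> ->; rewrite ?normrN normr1 ?mulrNN mulr1. Qed.

(* Witness h := e u - c m with c := |u x| / |m x|; f0 + h is a nonnegative multiple of m
   plus f or g. *)
Let sstar_flat x (e : R) : e = 1 \/ e = -1 -> e * u x * `|m x| = `|u x| * m x -> m x != 0 ->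
  `|u x| * r <= (1 - r) * `|m x| -> (sstar f0 x (t / 4) <= (1 - r)%:E)%E.
Proof.
move=> e1 align mx0 flat; have [ae ee] := sign_facts e1.
have mx_gt0 : 0 < `|m x| by rewrite normr_gt0.
have r0 := r_gt0; have [r78 r1] := andP r_bounds.
pose c := `|u x| / `|m x|.
have c0 : 0 <= c by rewrite divr_ge0 // ltW.
have cr : c * r <= 1 - r by rewrite /c mulrAC ler_pdivrMr.
have dh := is_dual_comb (- c) e dm du.
apply: le_trans (sstar_le f0 x (t / 4) dh _ _) _.
- have : dnorm u <= dnorm (fun z => - c * m z + e * u z) + c * r.
    apply: le_trans (dnorm_le_sum (is_dualZ e dh) (is_dualZ (e * c) dm) _) _.
      by move=> z /=; rewrite -[LHS]mul1r -ee; ring.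
    by rewrite (dnormZ e dh) (dnormZ (e * c) dm) ae mul1r normrM ae mul1r nm ger0_norm.
  by have := nu; have := small_gap; lra.
- have cq : c * m x = e * u x by rewrite /c mulrAC -align mulfK ?gt_eqF.
  by rewrite mulNr cq addNr.
have k0 : 0 <= r^-1 - c - 1.
  rewrite subr_ge0 -(ler_pM2r r0) mulrBl mulVf ?gt_eqF // mul1r; lra.
have dw : is_dual (fun z => m z + e * u z) by exact: is_dualD dm (is_dualZ e du).
have : dnorm (f0 \+ (fun z => - c * m z + e * u z)) <= (r^-1 - c - 1) * r + 1.
  apply: le_trans (dnorm_le_sum (is_dualZ (r^-1 - c - 1) dm) dw _) _.
    by move=> z /=; rewrite /f0; ring.
  by rewrite dnormZ // nm ger0_norm // lerD2l; exact: dnorm_mu.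
rewrite !mulrBl mulVf ?gt_eqF // mul1r lee_fin.
by have := mulr_ge0 c0 (ltW r0); lra.
Qed.

(* Witness h := s (m + e u) - f0 with s := |m x| / (r (|m x| + |u x|)) <= 1; |h| is bounded
   below by writing both f0 and s e u in terms of h. *)
Let sstar_cone x (e : R) : e = 1 \/ e = -1 -> e * u x * `|m x| = `|u x| * m x ->
  (1 - r) * `|m x| < `|u x| * r -> (sstar f0 x (t / 4) <= (1 - r)%:E)%E.
Proof.
move=> e1 align cone; have [ae ee] := sign_facts e1.
have r0 := r_gt0; have [r78 r1] := andP r_bounds.
have ux0 : 0 < `|u x| by have := normr_ge0 (m x); nra.
have D0 : 0 < r * (`|m x| + `|u x|) by rewrite mulr_gt0 // ltr_wpDl.
pose s := `|m x| / (r * (`|m x| + `|u x|)).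
have s0 : 0 <= s by rewrite divr_ge0 // ltW.
have s1 : s <= 1 by rewrite ler_pdivrMr // mul1r; nra.
have dw : is_dual (fun z => m z + e * u z) by exact: is_dualD dm (is_dualZ e du).
have dsw := is_dualZ s dw.
have nsw : dnorm (fun z => s * (m z + e * u z)) <= s.
  by rewrite dnormZ // ger0_norm // -[leRHS]mulr1 ler_wpM2l //; exact: dnorm_mu.
have dh : is_dual (fun z => s * (m z + e * u z) - f0 z) by exact: is_dualB dsw df0.
apply: le_trans (sstar_le f0 x (t / 4) dh _ _) _.
- set H := dnorm _.
  have E1 : 1 <= s + H.
    rewrite -nf0; apply: le_trans (dnorm_le_sum dsw (is_dualZ (-1) dh) _) _.
      by move=> z /=; ring.
    by rewrite (dnormZ (-1) dh) normrN normr1 mul1r lerD2r.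
  have E2 : s * dnorm u <= H + (1 - s * r).
    have -> : s * dnorm u = dnorm (fun z => s * e * u z).
      by rewrite (dnormZ (s * e) du) normrM ae mulr1 ger0_norm.
    apply: le_trans (dnorm_le_sum dh (is_dualZ (r^-1 - s) dm) _) _.
      by move=> z /=; rewrite /f0; ring.
    rewrite dnormZ // nm ger0_norm ?mulrBl ?mulVf ?gt_eqF //.
    by rewrite subr_ge0; apply: le_trans s1 _; rewrite invf_ge1.
  have := nu; have := small_gap; have := t_lt2 => t2 gap nu'.
  have [|s_big] := lerP s (1 - t / 16); first lra.
  have : (1 - t / 16) * (t / 2 + r) <= s * (dnorm u + r) by apply: ler_pM; lra.
  nra.
- have E : `|m x| * (m x + e * u x) = m x * (`|m x| + `|u x|).
    by rewrite mulrDr [`|m x| * (e * u x)]mulrC align; ring.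
  rewrite /f0 /s mulrAC E; field.
  by rewrite !gt_eqF // ltr_wpDl.
have -> : f0 \+ (fun z => s * (m z + e * u z) - f0 z) = (fun z => s * (m z + e * u z)).
  by apply/funext => z /=; ring.
by rewrite lee_fin; lra.
Qed.

Lemma dstar_le_small_gap : (@dstar R X (t / 4) <= (1 - r)%:E)%E.
Proof.
apply: le_trans (dstar_le_dstar_f (t / 4) df0 nf0) _; apply: dstar_f_le => x _.
have [mx0|mx0] := eqVneq (m x) 0; first exact: sstar_zero.
have [e e1 align] := sign_align (u x) (m x).
have [flat|cone] := lerP (`|u x| * r) ((1 - r) * `|m x|).
- exact: sstar_flat e1 align mx0 flat.
- exact: sstar_cone e1 align cone.
Qed.

End SmallGap.

Lemma dstar_le_delta_dual {R : realType} {X : normedModType R} (t : R) :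
  (forall x : X, exists y, forall a : R, y != a *: x) -> 0 < t -> t < 2 ->
  (@dstar R X (t / 4) <= @delta_dual R X t)%E.
Proof.
move=> nonprop t0 t2; apply: le_ereal_inf_tmp => _ [[f g] [df nf dg ng fg] <-] /=.
have [large|small] := lerP (t / 16) (1 - dnorm (f \+ g) / 2).
- by apply: dstar_le_bound => //; [exists f | lra | lra].
- exact: dstar_le_small_gap.
Qed.

Theorem mainTheorem10 (R : realType) (X : completeNormedModType R)
  (hdim : exists x y : X, forall a b : R, a *: x + b *: y = 0 -> a = 0 /\ b = 0)
  (hpos : forall t : R, 0 < t < 2 -> (0 < @dstar R X t)%E) :
  forall t : R, 0 < t < 2 ->
    (@dstar R X (t / 4) <= @delta_dual R X t)%E /\
    (@delta_dual R X (t / 20) <= @dstar R X t)%E.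
Proof.
move=> t /andP [t0 t2]; split; last exact: delta_dual_le_dstar.
by apply: dstar_le_delta_dual => // x; exact: exists_nonproportional.
Qed.
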